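(* Let $h\ge 2$, let $k,l$ be positive integers with $k+l\le 2h-1$, and let $d_1,\dots,d_k,e_1,\dots,e_l$ be positive integers with $d_1+\dots+d_k=e_1+\dots+e_l\le h$. Then with probability $1$ the equation \[ d_1x_1+\dots+d_kx_k = e_1x_{k+1}+\dots+e_lx_{k+l} \] has only finitely many solutions $(x_1,\dots,x_{k+l})$ with $x_1,\dots,x_{k+l}$ pairwise distinct elements of $B$.
   Context: Fix an integer $h\ge 2$. Let $B$ be a random set of positive integers in which the events $\{n\in B\}$, $n=1,2,\dots$, are mutually independent and $\mathbb{P}(n\in B)=n^{-\frac{4h-3}{4h-1}}$. *)

From HB Require Import structures.
From mathcomp Require Import all_boot all_order all_algebra.
From mathcomp Require Import all_classical all_reals all_analysis.
Set Implicit Arguments. Unset Strict Implicit. Unset Printing Implicit Defensive.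
Import Order.TTheory GRing.Theory Num.Theory.
Local Open Scope classical_set_scope.
Local Open Scope ring_scope.

Definition mutually_independent_events {d : measure_display} {T : measurableType d}
  {R : realType} (P : probability T R) (E : nat -> set T) : Prop :=
  (forall n, measurable (E n)) /\
  forall s : seq nat, uniq s ->
    P (\bigcap_(j in [set` s]) E j) = (\prod_(j <- s) P (E j))%E.

Definition randset {T : Type} (E : nat -> set T) (w : T) : set nat :=
  [set n | (0 < n)%N /\ E n w].

Definition distinct_solutions (k l : nat) (dc : 'I_k -> nat) (ec : 'I_l -> nat)
  (S : set nat) : set ('I_(k + l) -> nat) :=
  [set x | injective x /\ (forall i, S (x i)) /\
     (\sum_(i < k) dc i * x (lshift l i) = \sum_(j < l) ec j * x (rshift k j))%N].

From HB Require Import structures.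
From mathcomp Require Import all_boot all_order all_algebra.
From mathcomp Require Import all_classical all_reals all_analysis.
From mathcomp Require Import zify.
Import Order.TTheory GRing.Theory Num.Theory.
Local Open Scope classical_set_scope.
Local Open Scope ring_scope.

(* A tuple x of pairwise distinct positive integers lies in B with probability
   prod_i x_i^(-α), where α = (4h-3)/(4h-1).  Put n = k+l and β = α/(n-1), and
   let x_j be the largest entry: then prod_i x_i^(-α) <= prod_(i <> j) x_i^(-nβ).
   A solution is determined by all its entries but x_j, so the expected number
   of solutions in B is at most n (sum_t t^(-nβ))^(n-1), which is finite because
   nβ > 1 precisely when n < 2h - 1/2.  Borel-Cantelli, applied to the countably
   many events "x lies in B", finishes the proof. *)

Section powR_nat.
Variable R : realType.

Lemma natr_powRN_nonincr (s : R) a b : 0 <= s -> (0 < a)%N -> (a <= b)%N ->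
  (b%:R : R) `^ (- s) <= a%:R `^ (- s).
Proof.
move=> s_ge0 a_gt0 ab.
rewrite !powRN lef_pV2 ?posrE ?powR_gt0 ?ltr0n ?(leq_trans a_gt0) //.
by apply: ge0_ler_powR; rewrite ?nnegrE ?ler0n ?ler_nat.
Qed.

Lemma natr_powRN_exp (s : R) t m :
  ((t%:R : R) `^ (- s)) ^+ m = t%:R `^ (- (s * m%:R)).
Proof. by rewrite -powR_mulrn ?powR_ge0 // -powRrM mulNr. Qed.

Lemma sumr_double_range (u : nat -> R) N :
  \sum_(0 <= i < N.*2) u i = \sum_(0 <= i < N) (u i.*2 + u i.*2.+1).
Proof.
elim: N => [|N IH]; first by rewrite !big_geq.
by rewrite doubleS !big_nat_recr //= IH addrA.
Qed.

(* Cauchy condensation: pairing the terms 2i and 2i+1 gives S(2N) <= 1 + q S(N). *)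
Lemma sum_powRN_le (s : R) : 1 < s -> forall K,
  \sum_(t < K) (t%:R : R) `^ (- s) <= (1 - 2 `^ (1 - s))^-1.
Proof.
move=> s_gt1.
pose g t := (t%:R : R) `^ (- s).
pose q : R := 2 `^ (1 - s).
have g_double t : g t.*2 = 2 `^ (- s) * g t by rewrite /g -mul2n natrM powRM.
have g_nonincr a b : (0 < a)%N -> (a <= b)%N -> g b <= g a.
  by apply: natr_powRN_nonincr; rewrite ltW // (lt_trans ltr01).
have qE : q = 2 * 2 `^ (- s).
  by rewrite /q powRD ?powRr1 // pnatr_eq0 implybT.
have q_lt1 : q < 1.
  rewrite /q /powR pnatr_eq0 /= expR_lt1 pmulr_llt0 ?ln_gt0 ?ltr1n //.
  by rewrite subr_lt0.
have g0 : g 0%N = 0 by rewrite /g powR0 // oppr_eq0 gt_eqF // (lt_trans ltr01).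
have g1 : g 1%N = 1 by rewrite /g powR1.
have double_step N : \sum_(0 <= t < N.*2) g t <= 1 + q * \sum_(0 <= t < N) g t.
  case: N => [|N]; first by rewrite !big_geq // mulr0 addr0.
  rewrite sumr_double_range big_ltn // [X in _ <= _ + _ * X]big_ltn //.
  rewrite double0 g0 g1 !add0r lerD2l mulr_sumr.
  apply: ler_sum_nat => i /andP[i_gt0 _].
  by rewrite qE -mulrA -g_double mulr_natl mulr2n lerD2l g_nonincr // double_gt0.
have sum_pow2 m : \sum_(0 <= t < 2 ^ m) g t <= (1 - q)^-1.
  elim: m => [|m IH].
    by rewrite expn0 big_nat1 g0 invr_ge0 subr_ge0 ltW.
  rewrite expnS mul2n (le_trans (double_step _)) //.
  apply: le_trans (_ : 1 + q * (1 - q)^-1 <= _); first by rewrite lerD2l ler_wpM2l ?powR_ge0.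
  have q1_neq0 : 1 - q != 0 by rewrite subr_eq0 eq_sym lt_eqF.
  by rewrite -{1}(mulfV q1_neq0) -mulrDl subrK mul1r.
move=> K; rewrite -(big_mkord xpredT g) (le_trans _ (sum_pow2 K)) //.
rewrite (big_cat_nat (leq0n K) (ltnW (ltn_expl K (ltnSn 1)))) /=.
by rewrite lerDl sumr_ge0 // => t _; apply: powR_ge0.
Qed.

End powR_nat.

Definition solution_eqb {k l : nat} (dc : 'I_k -> nat) (ec : 'I_l -> nat)
  (x : 'I_(k + l) -> nat) : bool :=
  (\sum_(i < k) dc i * x (lshift l i) == \sum_(j < l) ec j * x (rshift k j))%N.

Lemma weighted_sum_determines_coord n (c : 'I_n -> nat) (x y : 'I_n -> nat) j :
  (0 < c j)%N -> (forall i, i != j -> x i = y i) ->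
  (\sum_i c i * x i = \sum_i c i * y i)%N -> x j = y j.
Proof.
move=> cj_gt0 xy; rewrite (bigD1 j) // [RHS](bigD1 j) //=.
rewrite (eq_bigr (fun i => c i * y i)%N) => [/addIn/eqP|i /xy -> //].
by rewrite eqn_pmul2l // => /eqP.
Qed.

Section solution_coordinates.
Context {k l : nat} {dc : 'I_k -> nat} {ec : 'I_l -> nat}.
Hypotheses (dc_gt0 : forall i, (0 < dc i)%N) (ec_gt0 : forall j, (0 < ec j)%N).

Lemma solution_coord_determined (x y : 'I_(k + l) -> nat) j :
  solution_eqb dc ec x -> solution_eqb dc ec y ->
  (forall i, i != j -> x i = y i) -> x j = y j.
Proof.
move=> /eqP sx /eqP sy xy.
case: (split_ordP j) => [i ->|i ->] in xy *.
- apply: (@weighted_sum_determines_coord _ dc (fun i => x (lshift l i))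
    (fun i => y (lshift l i))) => [//|i' ni'|].
    by apply: xy; rewrite eq_lshift.
  by rewrite sx sy; apply: eq_bigr => j' _; rewrite xy // eq_rlshift.
- apply: (@weighted_sum_determines_coord _ ec (fun j => x (rshift k j))
    (fun j => y (rshift k j))) => [//|j' nj'|].
    by apply: xy; rewrite eq_rshift.
  by rewrite -sx -sy; apply: eq_bigr => i' _; rewrite xy // eq_lrshift.
Qed.

End solution_coordinates.

Lemma sumr_uniq_le_sum (R : numDomainType) (I : finType) (r : seq I) (F : I -> R) :
  uniq r -> (forall i, 0 <= F i) -> \sum_(i <- r) F i <= \sum_i F i.
Proof.
by move=> r_uniq F_ge0; rewrite big_uniq // [leRHS](bigID (mem r)) /= lerDl sumr_ge0.
Qed.

Section weighted_count.
Context {R : realType} {n : nat} {f : nat -> R} {Z : R}.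
Hypothesis f_ge0 : forall t, 0 <= f t.
Hypothesis f_nonincr : forall a b, (0 < a)%N -> (a <= b)%N -> f b <= f a.
Hypothesis sum_f_le : forall K, \sum_(t < K) f t ^+ n <= Z.

Lemma prod_exp_pred_le_max (x : 'I_n -> nat) j :
  (forall i, 0 < x i)%N -> (forall i, x i <= x j)%N ->
  \prod_i f (x i) ^+ n.-1 <= \prod_(i | i != j) f (x i) ^+ n.
Proof.
move=> x_gt0 x_le; have n_gt0 : (0 < n)%N by apply: leq_ltn_trans (ltn_ord j).
rewrite (bigD1 j) //=.
have -> : f (x j) ^+ n.-1 = \prod_(i | i != j) f (x j).
  by rewrite prodr_const cardC1 card_ord.
rewrite -big_split /=; apply: ler_prod => i _.
rewrite mulr_ge0 ?exprn_ge0 //= -{2}(prednK n_gt0) exprS ler_wpM2r ?exprn_ge0 //.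
exact: f_nonincr.
Qed.

Lemma prod_exp_pred_le_sum (x : 'I_n -> nat) : (0 < n)%N -> (forall i, 0 < x i)%N ->
  \prod_i f (x i) ^+ n.-1 <= \sum_j \prod_(i | i != j) f (x i) ^+ n.
Proof.
move=> n_gt0 x_gt0; have [j _ j_max] := @arg_maxnP _ (Ordinal n_gt0) xpredT x isT.
rewrite (le_trans (prod_exp_pred_le_max x j x_gt0 (fun i => j_max i isT))) //.
rewrite [leRHS](bigD1 j) //= lerDl sumr_ge0 // => j' _.
by rewrite prodr_ge0 // => i _; rewrite exprn_ge0.
Qed.

Lemma sum_prod_delta_le j K :
  \sum_(y : {ffun 'I_n -> 'I_K.+1})
     \prod_i (if i == j then ((y i == ord0)%:R : R) else f (y i) ^+ n)
  <= Z ^+ n.-1.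
Proof.
rewrite -(bigA_distr_bigA
  (fun i (t : 'I_K.+1) => if i == j then ((t == ord0)%:R : R) else f t ^+ n)).
rewrite (bigD1 j) //= eqxx.
rewrite (bigD1 ord0) //= big1 => [|t /negbTE -> //]; rewrite addr0 mul1r.
rewrite -[leRHS](_ : \prod_(i | i != j) Z = _); last first.
  by rewrite prodr_const cardC1 card_ord.
apply: ler_prod => i /negbTE ->.
by rewrite sum_f_le andbT sumr_ge0 // => t _; rewrite exprn_ge0.
Qed.

Lemma sum_prod_exp_pred_le (s : seq {ffun 'I_n -> nat}) :
  (0 < n)%N -> uniq s ->
  {in s, forall x : {ffun _ -> _}, forall i, 0 < x i}%N ->
  {in s &, forall x y : {ffun _ -> _},
    forall j, (forall i, i != j -> x i = y i) -> x j = y j} ->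
  \sum_(x <- s) \prod_i f (x i) ^+ n.-1 <= n%:R * Z ^+ n.-1.
Proof.
move=> n_gt0 s_uniq s_gt0 s_det.
pose K := (\max_(x <- s) \max_i x i)%N.
have le_K x i : x \in s -> (x i < K.+1)%N.
  move=> xs; rewrite ltnS (leq_trans (leq_bigmax (F := fun i => x i) i)) //.
  exact: (leq_bigmax_seq (F := fun x : {ffun 'I_n -> nat} => \max_i x i)).
have split_max x (xs : x \in s) := prod_exp_pred_le_sum x n_gt0 (s_gt0 x xs).
rewrite big_seq (le_trans (ler_sum _ split_max)) // -big_seq exchange_big /=.
apply: le_trans (_ : \sum_(j < n) Z ^+ n.-1 <= _); last first.
  by rewrite sumr_const card_ord mulr_natl.
apply: ler_sum => j _.
(* Forgetting the j-th coordinate, which is determined by the others, is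
   injective on s; G pins that coordinate to 0 in the box [0, K]^n. *)
pose trunc (x : {ffun 'I_n -> nat}) : {ffun 'I_n -> 'I_K.+1} :=
  [ffun i => inord (if i == j then 0 else x i)].
pose G (y : {ffun 'I_n -> 'I_K.+1}) :=
  \prod_i (if i == j then ((y i == ord0)%:R : R) else f (y i) ^+ n).
have G_trunc x : x \in s -> G (trunc x) = \prod_(i | i != j) f (x i) ^+ n.
  move=> xs; rewrite /G (bigD1 j) //= !ffunE eqxx -val_eqE /= inordK // mul1r.
  by apply: eq_bigr => i /negbTE ni; rewrite ni ffunE ni inordK // le_K.
have trunc_inj : {in s &, injective trunc}.
  move=> x y xs ys /ffunP trunc_xy.
  have xy i : i != j -> x i = y i.
    move=> ni; have /(congr1 val) := trunc_xy i.
    by rewrite !ffunE (negbTE ni) /= !inordK ?le_K.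
  apply/ffunP => i; case: (eqVneq i j) => [->|/xy //]; exact: s_det.
rewrite -(eq_big_seq _ G_trunc) -(big_map trunc xpredT G).
apply: le_trans (sum_prod_delta_le j K); apply: sumr_uniq_le_sum.
  by rewrite map_inj_in_uniq.
by move=> y; rewrite prodr_ge0 // => i _; case: ifP => _; rewrite ?ler0n ?exprn_ge0.
Qed.

End weighted_count.

Section borel_cantelli_countable.
Context {d} {T : measurableType d} {R : realType} (mu : {measure set T -> \bar R}).
Local Open Scope ereal_scope.

Lemma borel_cantelli_countable {X : countType} {A : X -> set T} {B : R} :
  (forall x, measurable (A x)) ->
  (forall s : seq X, uniq s -> \sum_(x <- s) mu (A x) <= B%:E) ->
  {ae mu, forall w, finite_set [set x | A x w]}.
Proof.
move=> mA sumA.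
pose F m := oapp A set0 (pickle_inv m).
have mF m : measurable (F m).
  by rewrite /F; case: (pickle_inv m) => [x|] /=; [exact: mA|exact: measurable0].
have sumF N :
    \sum_(0 <= m < N) mu (F m) = \sum_(x <- pmap pickle_inv (iota 0 N)) mu (A x).
  rewrite big_pmap /index_iota subn0; apply: congr_big => // m _.
  by rewrite /F; case: (pickle_inv m) => [x|] /=; rewrite ?measure0.
have null : mu (lim_sup_set F) = 0.
  apply: lim_sup_set_cvg0 => //; apply: (@le_lt_trans _ _ B%:E); last exact: ltry.
  apply: lime_le; first exact: is_cvg_nneseries.
  by apply: nearW => n; rewrite sumF sumA // (pmap_uniq (@pickle_invK X)) ?iota_uniq.
exists (lim_sup_set F); split => //.
  by apply: bigcapT_measurable => n; apply: bigcup_measurable => m _.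
move=> w /= infA; apply: contrapT => notF; apply: infA.
have [N FN] : exists N, forall m, (N <= m)%N -> ~ F m w.
  apply: contrapT => allF; apply: notF => n _.
  by apply: contrapT => nF; apply: allF; exists n => m nm Fm; apply: nF; exists m.
apply: sub_finite_set (finite_seq (pmap pickle_inv (iota 0 N))) => x Ax /=.
rewrite (can2_mem_pmap pickle_invK pickleK_inv) mem_iota add0n leq0n /=.
by rewrite ltnNge; apply/negP => /FN; rewrite /F pickleK_inv.
Qed.

End borel_cantelli_countable.

Lemma mutually_independent_bigcap d (T : measurableType d) (R : realType)
    (P : probability T R) (E : nat -> set T) (I : finType) (x : I -> nat) :
  mutually_independent_events P E -> injective x ->
  P (\bigcap_i E (x i)) = (\prod_i P (E (x i)))%E.
Proof.
move=> [_ indep] x_inj.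
have -> : \bigcap_i E (x i) = \bigcap_(j in [set` map x (enum I)]) E j.
  apply/seteqP; split => w Ew j /=; first by move=> /mapP[i _ ->]; exact: Ew.
  by move=> _; apply: Ew; apply: map_f; rewrite mem_enum.
rewrite indep; last by rewrite map_inj_uniq // enum_uniq.
by rewrite big_map enumT.
Qed.

Definition distinct_solutionb {k l : nat} (dc : 'I_k -> nat) (ec : 'I_l -> nat)
  (x : {ffun 'I_(k + l) -> nat}) : bool :=
  [&& injectiveb x, [forall i, 0 < x i]%N & solution_eqb dc ec x].

Section first_moment.
Context {R : realType} {d : measure_display} {T : measurableType d}.
Variables (P : probability T R) (E : nat -> set T) (α : R).
Hypothesis indepE : mutually_independent_events P E.
Hypothesis PE : forall t, (0 < t)%N -> P (E t) = ((t%:R : R) `^ (- α))%:E.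
Context {k l : nat} (dc : 'I_k -> nat) (ec : 'I_l -> nat).
Hypotheses (dc_gt0 : forall i, (0 < dc i)%N) (ec_gt0 : forall j, (0 < ec j)%N).

Definition solution_event (x : {ffun 'I_(k + l) -> nat}) : set T :=
  if distinct_solutionb dc ec x then \bigcap_i E (x i) else set0.

Lemma measurable_solution_event x : measurable (solution_event x).
Proof.
rewrite /solution_event; case: ifP => _; last exact: measurable0.
by apply: fin_bigcap_measurable => [|i _]; [exact: finite_finset|case: indepE].
Qed.

Lemma solution_event_prob x : P (solution_event x) =
  (if distinct_solutionb dc ec x then \prod_i (x i)%:R `^ (- α) else 0)%:E.
Proof.
rewrite /solution_event; case: ifP => [|_]; last exact: measure0.
case/and3P => /injectiveP x_inj /forallP x_gt0 _.
by rewrite mutually_independent_bigcap // -prodEFin; apply: eq_bigr => i _; exact: PE.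
Qed.

Lemma distinct_solutions_sub w :
  distinct_solutions dc ec (randset E w) `<=`
  (fun x : {ffun 'I_(k + l) -> nat} => x : 'I_(k + l) -> nat) @` [set x | solution_event x w].
Proof.
move=> x [x_inj [x_in /eqP x_sol]].
exists [ffun i => x i]; last by apply: funext => i; rewrite ffunE.
rewrite /= /solution_event ifT; first by move=> i _; rewrite ffunE; exact: (x_in i).2.
apply/and3P; split; [apply/injectiveP => i j|apply/forallP => i|]; rewrite ?ffunE.
- exact: x_inj.
- exact: (x_in i).1.
- by under [X in solution_eqb _ _ X]funext do rewrite ffunE.
Qed.

Hypotheses (k_gt0 : (0 < k)%N) (l_gt0 : (0 < l)%N).
Hypothesis α_gt : (k + l).-1%:R < α * (k + l)%:R.

Lemma solution_events_summable : exists B : R,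
  forall s, uniq s -> (\sum_(x <- s) P (solution_event x) <= B%:E)%E.
Proof.
pose n := (k + l)%N; pose β := α / n.-1%:R.
have n_gt0 : (0 < n)%N by rewrite /n; lia.
have n1_gt0 : (0 < n.-1)%N by rewrite /n; lia.
have αE : α = β * n.-1%:R by rewrite divfK // pnatr_eq0 -lt0n.
have βn_gt1 : 1 < β * n%:R.
  by rewrite -(@ltr_pM2r _ n.-1%:R) ?ltr0n // mul1r mulrAC -αE.
have β_ge0 : 0 <= β.
  by rewrite ltW // -(@pmulr_lgt0 _ n%:R) ?ltr0n // (lt_trans ltr01).
pose f t := (t%:R : R) `^ (- β).
have f_ge0 t : 0 <= f t by apply: powR_ge0.
have f_nonincr a b : (0 < a)%N -> (a <= b)%N -> f b <= f a by apply: natr_powRN_nonincr.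
pose Z := (1 - 2 `^ (1 - β * n%:R))^-1.
have sum_f_le K : \sum_(t < K) f t ^+ n <= Z.
  by under eq_bigr do rewrite natr_powRN_exp; apply: sum_powRN_le.
exists (n%:R * Z ^+ n.-1) => s s_uniq.
rewrite (eq_bigr _ (fun x _ => solution_event_prob x)) sumEFin lee_fin.
rewrite -big_mkcond -big_filter /=.
have powRαE t : (t%:R : R) `^ (- α) = f t ^+ n.-1 by rewrite natr_powRN_exp -αE.
under eq_bigr do under eq_bigr do rewrite powRαE.
rewrite (sum_prod_exp_pred_le f_ge0 f_nonincr sum_f_le) ?filter_uniq //.
- by move=> x; rewrite mem_filter => /andP[/and3P[_ /forallP x_gt0 _] _].
move=> x y; rewrite !mem_filter => /andP[/and3P[_ _ sx] _] /andP[/and3P[_ _ sy] _] j.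
exact: (solution_coord_determined dc_gt0 ec_gt0 _ _ _ sx sy).
Qed.

Theorem ae_finite_distinct_solutions :
  {ae P, forall w, finite_set (distinct_solutions dc ec (randset E w))}.
Proof.
have [B sumB] := solution_events_summable.
apply: filterS (borel_cantelli_countable P measurable_solution_event sumB) => w finA.
exact: sub_finite_set (distinct_solutions_sub w) (finite_image _ finA).
Qed.

End first_moment.

Lemma predn_lt_ratio_mul (R : realFieldType) h n : (2 <= h)%N -> (0 < n <= 2 * h - 1)%N ->
  n.-1%:R < (4 * h - 3)%:R / (4 * h - 1)%:R * (n%:R : R).
Proof.
move=> h_ge2 /andP[n_gt0 n_le].
rewrite mulrAC ltr_pdivlMr ?ltr0n; last lia.
by rewrite -!natrM ltr_nat; nia.
Qed.

Theorem lemma8 (R : realType) (d : measure_display) (T : measurableType d)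
  (P : probability T R) (h : nat) (E : nat -> set T) :
  (2 <= h)%N ->
  mutually_independent_events P E ->
  (forall n : nat, (0 < n)%N ->
     P (E n) = ((n%:R : R) `^ (- ((4 * h - 3)%:R / (4 * h - 1)%:R)))%:E) ->
  forall (k l : nat) (dc : 'I_k -> nat) (ec : 'I_l -> nat),
  (0 < k)%N -> (0 < l)%N -> (k + l <= 2 * h - 1)%N ->
  (forall i, (0 < dc i)%N) -> (forall j, (0 < ec j)%N) ->
  (\sum_(i < k) dc i)%N = (\sum_(j < l) ec j)%N ->
  (\sum_(i < k) dc i <= h)%N ->
  {ae P, forall w, finite_set (distinct_solutions dc ec (randset E w))}.
Proof.
move=> h_ge2 indepE PE k l dc ec k_gt0 l_gt0 kl_le dc_gt0 ec_gt0 _ _.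
apply: (ae_finite_distinct_solutions P E _ indepE PE dc ec dc_gt0 ec_gt0 k_gt0 l_gt0).
by apply: predn_lt_ratio_mul; rewrite // addn_gt0 k_gt0.
Qed.
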